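(* Let $D,D',E,E'$ be abstract storage devices. (i) If $D\le D'$ and $E\le E'$, then $D\times E\le D'\times E'$. (ii) If $D\le D'$, then $D^{(k)}\le D'^{(k)}$ for every integer $k\ge1$.
   Context: An abstract storage device (ASD) is a pair $D=(\mathcal{S}_D,\mathcal{P}_D)$, $\mathcal{S}_D$ a finite set and $\mathcal{P}_D$ a finite family of partitions of $\mathcal{S}_D$. For a partition $\pi$ of $\mathcal{S}'$ and $\phi:\mathcal{S}\to\mathcal{S}'$, $\pi\circ\phi$ is the partition of $\mathcal{S}$ with $x,y$ in the same block iff $\phi(x),\phi(y)$ are in the same block of $\pi$; $\pi\preceq\rho$ means every block of $\pi$ lies in a block of $\rho$; $\wedge$ is the meet of partitions (nonempty pairwise intersections of blocks). $D\le D'$ means there exist $\phi:\mathcal{S}_D\to\mathcal{S}_{D'}$, $\alpha:\mathcal{P}_D\to\mathcal{P}_{D'}$ with $\alpha(\pi)\circ\phi\preceq\pi$ for all $\pi\in\mathcal{P}_D$. The direct product $D\times D'$ has state space $\mathcal{S}_D\times\mathcal{S}_{D'}$ and partition set $\{\pi\times\pi':\pi\in\mathcal{P}_D,\pi'\in\mathcal{P}_{D'}\}$ with $\pi\times\pi'=\{B\times B':B\in\pi,B'\in\pi'\}$. For $k\ge1$, $D^{(k)}$ has state space $\mathcal{S}_D$ and partition set $\{\pi_1\wedge\cdots\wedge\pi_k:\pi_1,\dots,\pi_k\in\mathcal{P}_D\}$. *)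

From HB Require Import structures.
From mathcomp Require Import all_boot.
Set Implicit Arguments. Unset Strict Implicit. Unset Printing Implicit Defensive.

(* A partition of a finite type T is a set of blocks {set {set T}}. *)

(* Abstract storage device: a finite state space and a finite family of
   (candidate) partitions of it.  Validity (each member is a partition of the
   whole state space) is the predicate [valid_ASD]. *)
Record ASD := MkASD { st : finType; parts : {set {set {set st}}} }.

Definition valid_ASD (D : ASD) : Prop :=
  forall pi, pi \in parts D -> partition pi [set: st D].

(* pi \o phi : x ~ y iff phi x, phi y lie in the same block of pi;
   its blocks are the nonempty preimages of blocks of pi. *)
Definition pcomp (T T' : finType) (pi : {set {set T'}}) (phi : T -> T')
  : {set {set T}} :=
  [set phi @^-1: B | B : {set T'} in pi & phi @^-1: B != set0].

Definition prefines (T : finType) (pi rho : {set {set T}}) : bool :=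
  [forall B in pi, exists C in rho, B \subset C].

Definition asd_le (D D' : ASD) : Prop :=
  exists (phi : st D -> st D') (alpha : {set {set st D}} -> {set {set st D'}}),
    forall pi, pi \in parts D ->
      alpha pi \in parts D' /\ prefines (pcomp (alpha pi) phi) pi.

Definition pprod (T T' : finType) (pi : {set {set T}}) (pi' : {set {set T'}})
  : {set {set (T * T')}} :=
  [set setX B B' | B in pi, B' in pi'].

Definition asd_prod (D E : ASD) : ASD :=
  @MkASD (st D * st E)%type [set pprod pi pi' | pi in parts D, pi' in parts E].

Definition pmeet (T : finType) (pi rho : {set {set T}}) : {set {set T}} :=
  [set B :&: C | B in pi, C in rho & B :&: C != set0].

(* the set of all meets pi_1 ∧ ... ∧ pi_k with pi_i in P  (k >= 1),
   computed as ((pi_1 ∧ pi_2) ∧ ...) ∧ pi_k *)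
Definition kmeets (T : finType) (P : {set {set {set T}}}) (k : nat)
  : {set {set {set T}}} :=
  iter k.-1 (fun Q : {set {set {set T}}} => [set pmeet pi rho | pi in Q, rho in P]) P.

Definition asd_pow (D : ASD) (k : nat) : ASD :=
  @MkASD (st D) (kmeets (parts D) k).

From Pilot Require Import Defs.
From mathcomp Require Import all_boot.
Set Implicit Arguments. Unset Strict Implicit. Unset Printing Implicit Defensive.

(* Once the map alpha is forgotten, D <= D' only says that every partition of D
   is refined by the pull-back along phi of some partition of D'.  Pull-backs
   commute with products and with meets of partitions, so witnesses phi for
   D <= D' and psi for E <= E' give the witness phi x psi for the products,
   and phi itself works for the k-fold meets, by induction on k. *)

Definition simulated (T T' : finType) (phi : T -> T')
    (P : {set {set {set T}}}) (P' : {set {set {set T'}}}) : Prop :=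
  forall pi, pi \in P -> exists2 rho, rho \in P' & prefines (Defs.pcomp rho phi) pi.

Lemma asd_leP (D D' : ASD) :
  asd_le D D' <-> exists phi : st D -> st D', simulated phi (parts D) (parts D').
Proof.
split=> [[phi [alpha Halpha]] | [phi Hphi]].
  by exists phi => pi /Halpha[? ?]; exists (alpha pi).
pose alpha pi := odflt set0 [pick rho in parts D' | prefines (Defs.pcomp rho phi) pi].
exists phi, alpha => pi /Hphi[rho Hrho Href]; rewrite /alpha.
by case: pickP => [? /andP[] // | /(_ rho)]; rewrite Hrho Href.
Qed.

Lemma prefines_pcompP (T T' : finType) (rho : {set {set T'}}) (phi : T -> T')
    (pi : {set {set T}}) :
  reflect (forall C, C \in rho -> phi @^-1: C != set0 ->
             exists2 B, B \in pi & phi @^-1: C \subset B)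
          (prefines (Defs.pcomp rho phi) pi).
Proof.
apply: (iffP forall_inP) => [Hpi C Crho Cne | Hrho X /imsetP[C]].
  have /Hpi/exists_inP[B ? ?] : phi @^-1: C \in Defs.pcomp rho phi; last by exists B.
  by apply/imsetP; exists C; rewrite // inE Crho.
by rewrite inE => /andP[Crho Cne] ->; have [B ? ?] := Hrho C Crho Cne; apply/exists_inP; exists B.
Qed.

Lemma preimsetX (T1 T2 T1' T2' : finType) (phi1 : T1 -> T1') (phi2 : T2 -> T2')
    (C1 : {set T1'}) (C2 : {set T2'}) :
  (fun x => (phi1 x.1, phi2 x.2)) @^-1: setX C1 C2 = setX (phi1 @^-1: C1) (phi2 @^-1: C2).
Proof. by apply/setP => x; rewrite !inE. Qed.

Lemma prefines_pcomp_pprod (T1 T2 T1' T2' : finType) (phi1 : T1 -> T1') (phi2 : T2 -> T2')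
    (pi1 : {set {set T1}}) (pi2 : {set {set T2}})
    (rho1 : {set {set T1'}}) (rho2 : {set {set T2'}}) :
  prefines (Defs.pcomp rho1 phi1) pi1 -> prefines (Defs.pcomp rho2 phi2) pi2 ->
  prefines (Defs.pcomp (pprod rho1 rho2) (fun x => (phi1 x.1, phi2 x.2))) (pprod pi1 pi2).
Proof.
move=> /prefines_pcompP Href1 /prefines_pcompP Href2.
apply/prefines_pcompP => C /imset2P[C1 C2 HC1 HC2 ->].
rewrite preimsetX => /set0Pn[[a b]]; rewrite !inE /= => /andP[ha hb].
have [|B1 HB1 S1] := Href1 C1 HC1; first by apply/set0Pn; exists a; rewrite inE.
have [|B2 HB2 S2] := Href2 C2 HC2; first by apply/set0Pn; exists b; rewrite inE.
by exists (setX B1 B2); [apply/imset2P; exists B1 B2 | apply: setXS].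
Qed.

Lemma prefines_pcomp_pmeet (T T' : finType) (phi : T -> T')
    (pi1 pi2 : {set {set T}}) (rho1 rho2 : {set {set T'}}) :
  prefines (Defs.pcomp rho1 phi) pi1 -> prefines (Defs.pcomp rho2 phi) pi2 ->
  prefines (Defs.pcomp (pmeet rho1 rho2) phi) (pmeet pi1 pi2).
Proof.
move=> /prefines_pcompP Href1 /prefines_pcompP Href2.
apply/prefines_pcompP => C /imset2P[C1 C2 HC1]; rewrite inE => /andP[HC2 _] ->.
rewrite preimsetI => /set0Pn[a]; rewrite inE => /andP[ha hb].
have [|B1 HB1 S1] := Href1 C1 HC1; first by apply/set0Pn; exists a.
have [|B2 HB2 S2] := Href2 C2 HC2; first by apply/set0Pn; exists a.
exists (B1 :&: B2); last exact: setISS.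
apply/imset2P; exists B1 B2; rewrite // inE HB2; apply/set0Pn; exists a.
by rewrite inE (subsetP S1) ?(subsetP S2).
Qed.

Lemma simulated_pprod (T1 T2 T1' T2' : finType) (phi1 : T1 -> T1') (phi2 : T2 -> T2')
    (P1 : {set {set {set T1}}}) (P2 : {set {set {set T2}}})
    (P1' : {set {set {set T1'}}}) (P2' : {set {set {set T2'}}}) :
  simulated phi1 P1 P1' -> simulated phi2 P2 P2' ->
  simulated (fun x => (phi1 x.1, phi2 x.2))
    [set pprod pi1 pi2 | pi1 in P1, pi2 in P2]
    [set pprod rho1 rho2 | rho1 in P1', rho2 in P2'].
Proof.
move=> Hsim1 Hsim2 _ /imset2P[pi1 pi2 /Hsim1[rho1 ? ?] /Hsim2[rho2 ? ?] ->].
exists (pprod rho1 rho2); first by apply/imset2P; exists rho1 rho2.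
exact: prefines_pcomp_pprod.
Qed.

Lemma simulated_pmeet (T T' : finType) (phi : T -> T')
    (P Q : {set {set {set T}}}) (P' Q' : {set {set {set T'}}}) :
  simulated phi P P' -> simulated phi Q Q' ->
  simulated phi [set pmeet pi1 pi2 | pi1 in P, pi2 in Q]
                [set pmeet rho1 rho2 | rho1 in P', rho2 in Q'].
Proof.
move=> HsimP HsimQ _ /imset2P[pi1 pi2 /HsimP[rho1 ? ?] /HsimQ[rho2 ? ?] ->].
exists (pmeet rho1 rho2); first by apply/imset2P; exists rho1 rho2.
exact: prefines_pcomp_pmeet.
Qed.

Lemma simulated_kmeets (T T' : finType) (phi : T -> T')
    (P : {set {set {set T}}}) (P' : {set {set {set T'}}}) (k : nat) :
  simulated phi P P' -> simulated phi (kmeets P k) (kmeets P' k).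
Proof.
move=> Hsim; rewrite /kmeets; elim: k.-1 => [|n IHn] //=.
exact: simulated_pmeet.
Qed.

Theorem proposition1 :
  (forall D D' E E' : ASD,
      valid_ASD D -> valid_ASD D' -> valid_ASD E -> valid_ASD E' ->
      asd_le D D' -> asd_le E E' ->
      asd_le (asd_prod D E) (asd_prod D' E')) /\
  (forall (D D' : ASD) (k : nat),
      valid_ASD D -> valid_ASD D' -> 1 <= k ->
      asd_le D D' -> asd_le (asd_pow D k) (asd_pow D' k)).
Proof.
split.
  move=> D D' E E' _ _ _ _ /asd_leP[phi1 Hsim1] /asd_leP[phi2 Hsim2].
  by apply/asd_leP; exists (fun x => (phi1 x.1, phi2 x.2)); exact: simulated_pprod.
move=> D D' k _ _ _ /asd_leP[phi Hsim].
by apply/asd_leP; exists phi; exact: simulated_kmeets.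
Qed.
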